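(* Let $\hat{\mathbf{u}}(\hat{\mathbf{x}},t)$, $\hat{\mathbf{x}}=(x_1,x_2)\in\mathbb{R}^2$, be a solution of the 2D incompressible Navier–Stokes equations $\partial_t\hat{\mathbf{u}}+(\nabla_{\hat{\mathbf{x}}}\hat{\mathbf{u}})\hat{\mathbf{u}}=-\rho^{-1}\nabla_{\hat{\mathbf{x}}}p+\nu\Delta_{\hat{\mathbf{x}}}\hat{\mathbf{u}}$, $\nabla_{\hat{\mathbf{x}}}\cdot\hat{\mathbf{u}}=0$, with constant density $\rho$, viscosity $\nu$, scalar vorticity $\hat{\omega}=\partial_{x_1}\hat u_2-\partial_{x_2}\hat u_1$ and planar flow map $\hat{\mathbf{F}}_{t_0}^{t}$. View it as the 3D incompressible Navier–Stokes solution $\mathbf{u}(\mathbf{x},t)=(\hat{\mathbf{u}}(\hat{\mathbf{x}},t),\hat{\omega}(\hat{\mathbf{x}},t))$, $\mathbf{x}=(\hat{\mathbf{x}},x_3)$, with flow map $\mathbf{F}_{t_0}^t$. Then the $\hat{\mathbf{x}}$-components of the material and instantaneous barrier equations for linear momentum, $\mathbf{x}_0'=\nu\rho\frac{1}{t_1-t_0}\int_{t_0}^{t_1}(\mathbf{F}_{t_0}^{t})^{*}\Delta\mathbf{u}\,dt$ and $\mathbf{x}'=\nu\rho\Delta\mathbf{u}(\mathbf{x},t)$, are autonomous Hamiltonian systems of the form $$\hat{\mathbf{x}}_0'=\nu\rho\,\mathbf{J}\nabla_0\,\overline{\hat{\omega}\big(\hat{\mathbf{F}}_{t_0}^{t}(\hat{\mathbf{x}}_0),t\big)},\qquad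 \hat{\mathbf{x}}'=\nu\rho\,\mathbf{J}\nabla\hat{\omega}(\hat{\mathbf{x}},t),$$ respectively. Therefore, time-$t_0$ positions of material active barriers to linear momentum transport are structurally stable level curves of the time-averaged Lagrangian vorticity $\overline{\hat{\omega}(\hat{\mathbf{F}}_{t_0}^{t}(\hat{\mathbf{x}}_0),t)}$, and instantaneous active barriers to linear momentum transport at time $t$ are structurally stable level curves of $\hat{\omega}(\hat{\mathbf{x}},t)$.
   Context: $\mathbf{J}=\begin{pmatrix}0&1\\-1&0\end{pmatrix}$. The overbar denotes time average along trajectories: $\overline{v}(\mathbf{x}_0)=\frac{1}{t_1-t_0}\int_{t_0}^{t_1}v(\mathbf{x}_0,t)\,dt$; $\nabla_0$ is the gradient with respect to $\hat{\mathbf{x}}_0$. The pull-back is $(\mathbf{F}_{t_0}^{t})^{*}\mathbf{w}(\mathbf{x}_0)=[\nabla\mathbf{F}_{t_0}^{t}(\mathbf{x}_0)]^{-1}\mathbf{w}(\mathbf{F}_{t_0}^{t}(\mathbf{x}_0),t)$; primes denote derivatives with respect to a parameter $s$ along trajectories. A material (resp. instantaneous) active barrier is a material surface whose time-$t_0$ position is a structurally stable (persistent under small smooth perturbations of $\mathbf{u}$) 2D invariant manifold of the material (resp. instantaneous, at fixed $t$) barrier equation; in this symmetric setting such barriers are products of planar curves with the $x_3$-direction, and the statement refers to these planar curves. *)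

From Stdlib Require Import Reals.
From Coquelicot Require Import Coquelicot.
From mathcomp Require Import all_boot all_algebra.
From mathcomp Require Import Rstruct.

Set Implicit Arguments.
Unset Strict Implicit.
Unset Printing Implicit Defensive.

Import GRing.Theory.
Local Open Scope ring_scope.

Definition i0 : 'I_2 := ord0.
Definition i1 : 'I_2 := ord_max.
Definition j0 : 'I_1 := ord0.

Definition pdir {n} (j : 'I_n) (f : 'cV[R]_n -> R) (x : 'cV[R]_n) : R :=
  Derive (fun s : R => f (x + s *: delta_mx j j0)) 0%R.

Definition grad {n} (f : 'cV[R]_n -> R) (x : 'cV[R]_n) : 'cV[R]_n :=
  \col_i pdir i f x.
Definition lap {n} (f : 'cV[R]_n -> R) (x : 'cV[R]_n) : R :=
  \sum_j pdir j (pdir j f) x.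
Definition lapv {n} (U : 'cV[R]_n -> R -> 'cV[R]_n) (x : 'cV[R]_n) (t : R)
  : 'cV[R]_n := \col_i lap (fun y => U y t i j0) x.
Definition jac {n} (G : 'cV[R]_n -> 'cV[R]_n) (x : 'cV[R]_n) : 'M[R]_n :=
  \matrix_(i, j) pdir j (fun y => G y i j0) x.

Definition Jmx : 'M[R]_2 :=
  \matrix_(i, j) (if (val i == 0%N) && (val j == 1%N) then 1
                  else if (val i == 1%N) && (val j == 0%N) then -1 else 0).

(* partial derivative in space direction (Some i) or in time (None) *)
Definition pdx {n} (d : option 'I_n) (h : 'cV[R]_n -> R -> R)
  : 'cV[R]_n -> R -> R :=
  fun x t => match d with
             | Some i => Derive (fun s : R => h (x + s *: delta_mx i j0) t) 0%R
             | None => Derive (fun s : R => h x s) t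
             end.
Definition ex_pdx {n} (d : option 'I_n) (h : 'cV[R]_n -> R -> R)
  (x : 'cV[R]_n) (t : R) : Prop :=
  match d with
  | Some i => ex_derive (fun s : R => h (x + s *: delta_mx i j0) t) 0%R
  | None => ex_derive (fun s : R => h x s) t
  end.
Fixpoint iterD {n} (l : seq (option 'I_n)) (h : 'cV[R]_n -> R -> R)
  : 'cV[R]_n -> R -> R :=
  match l with
  | [::] => h
  | d :: l' => pdx d (iterD l' h)
  end.
Definition jcont {n} (h : 'cV[R]_n -> R -> R) : Prop :=
  forall (x : 'cV[R]_n) (t eps : R), (0 < eps)%R ->
    exists delta : R, (0 < delta)%R /\
      forall (y : 'cV[R]_n) (s : R),
        (forall i, (Rabs (y i j0 - x i j0) < delta)%R) ->
        (Rabs (s - t) < delta)%R ->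
        (Rabs (h y s - h x t) < eps)%R.
Definition smooth {n} (h : 'cV[R]_n -> R -> R) : Prop :=
  forall l : seq (option 'I_n),
    jcont (iterD l h) /\ forall d x t, ex_pdx d (iterD l h) x t.

Definition incompressible2 (u : 'cV[R]_2 -> R -> 'cV[R]_2) : Prop :=
  forall x t, pdir i0 (fun y => u y t i0 j0) x + pdir i1 (fun y => u y t i1 j0) x = 0.

Definition navier_stokes2 (rho nu : R) (u : 'cV[R]_2 -> R -> 'cV[R]_2)
  (p : 'cV[R]_2 -> R -> R) : Prop :=
  forall x t (i : 'I_2),
    Derive (fun s : R => u x s i j0) t
      + \sum_(j < 2) pdir j (fun y => u y t i j0) x * u x t j j0
    = - (rho^-1 * pdir i (fun y => p y t) x) + nu * lap (fun y => u y t i j0) x.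

Definition vort (u : 'cV[R]_2 -> R -> 'cV[R]_2) (y : 'cV[R]_2) (t : R) : R :=
  pdir i0 (fun z => u z t i1 j0) y - pdir i1 (fun z => u z t i0 j0) y.

Definition proj3 (x : 'cV[R]_3) : 'cV[R]_2 :=
  \col_(i < 2) x (widen_ord (isT : (2 <= 3)%N) i) j0.

Definition lift3 (u : 'cV[R]_2 -> R -> 'cV[R]_2) (x : 'cV[R]_3) (t : R)
  : 'cV[R]_3 :=
  \col_(i < 3) (if val i == 0%N then u (proj3 x) t i0 j0
                else if val i == 1%N then u (proj3 x) t i1 j0
                else vort u (proj3 x) t).

Definition flow_map {n} (t0 : R) (U : 'cV[R]_n -> R -> 'cV[R]_n)
  (F : R -> 'cV[R]_n -> 'cV[R]_n) : Prop :=
  (forall x, F t0 x = x) /\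
  (forall x t i, is_derive (fun s : R => F s x i j0) t (U (F t x) t i j0)) /\
  (forall i, smooth (fun x t => F t x i j0)).

Definition tavg (t0 t1 : R) (g : R -> R) : R := (/ (t1 - t0) * RInt g t0 t1)%R.

Definition pullback {n} (F : R -> 'cV[R]_n -> 'cV[R]_n)
  (w : 'cV[R]_n -> R -> 'cV[R]_n) (t : R) (x0 : 'cV[R]_n) : 'cV[R]_n :=
  invmx (jac (F t) x0) *m w (F t x0) t.

Definition material_barrier_field {n} (rho nu t0 t1 : R)
  (F : R -> 'cV[R]_n -> 'cV[R]_n) (U : 'cV[R]_n -> R -> 'cV[R]_n)
  (x0 : 'cV[R]_n) : 'cV[R]_n :=
  (nu * rho) *: \col_i tavg t0 t1 (fun t => pullback F (lapv U) t x0 i j0).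

Definition inst_barrier_field {n} (rho nu t : R)
  (U : 'cV[R]_n -> R -> 'cV[R]_n) (x : 'cV[R]_n) : 'cV[R]_n :=
  (nu * rho) *: lapv U x t.

Definition trajectory {n} (B : 'cV[R]_n -> 'cV[R]_n) (gamma : R -> 'cV[R]_n) : Prop :=
  forall s i, is_derive (fun r : R => gamma r i j0) s (B (gamma s) i j0).

(* For a divergence-free planar field, differentiating div u = 0 gives
   Lap u = - J grad omega; the lift (u, omega) has the same planar Laplacian, which is the
   instantaneous statement.  For the material one, the planar part of the lifted flow F is
   the planar flow Fh (uniqueness for ODEs with C^1 right-hand side), so grad F is block
   lower triangular with planar block A = grad Fh, and det A = 1 (Liouville).  Hence the
   planar part of the pull-back is A^-1 (- J grad omega (Fh)) = - J A^T grad omega (Fh)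
   = - J grad (omega o Fh), and averaging in time (differentiating under the integral)
   gives - J grad omegabar.  Finally H is constant along trajectories of x' = c J grad H
   because J is skew. *)

From Pilot Require Import Defs.
From Stdlib Require Import Reals Lra Classical IndefiniteDescription FunctionalExtensionality.
From Coquelicot Require Import Coquelicot.
From mathcomp Require Import all_boot all_algebra.
From mathcomp Require Import Rstruct.
Import GRing.Theory.

Set Implicit Arguments.
Unset Strict Implicit.
Unset Printing Implicit Defensive.

(* MathComp rebinds the key %R to ring_scope; these keys name both scopes unambiguously. *)
Delimit Scope R_scope with Re.
Delimit Scope ring_scope with ring.
Local Open Scope ring_scope.

Lemma ord2_ind (P : 'I_2 -> Prop) : P i0 -> P i1 -> forall i, P i.
Proof.
move=> P0 P1 [[|[|k]] lt_k2] //.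
- by have -> : Ordinal lt_k2 = i0 by apply: val_inj.
- by have -> : Ordinal lt_k2 = i1 by apply: val_inj.
Qed.

Definition vec2 (a b : R) : 'cV[R]_2 := \col_i (if val i == 0%N then a else b).

Lemma vec2_eta (x : 'cV[R]_2) : vec2 (x i0 j0) (x i1 j0) = x.
Proof. by apply/matrixP => i j; rewrite (ord1 j) mxE; move: i; apply: ord2_ind. Qed.

Definition translate {n} (x : 'cV[R]_n) (j : 'I_n) (s : R) : 'cV[R]_n :=
  x + s *: delta_mx j j0.

Lemma translateE {n} (x : 'cV[R]_n) j s i :
  translate x j s i j0 = (x i j0 + (if i == j then s else 0))%R.
Proof. by rewrite !mxE /=; case: (i == j); rewrite /= ?mulr1 ?mulr0. Qed.

Lemma translate0 {n} (x : 'cV[R]_n) j : translate x j 0 = x.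
Proof. by rewrite /translate scale0r addr0. Qed.

Lemma translateD {n} (x : 'cV[R]_n) j s r :
  translate (translate x j s) j r = translate x j (s + r).
Proof. by rewrite /translate scalerDl addrA. Qed.

Lemma translate_vec2_0 a b s : translate (vec2 a b) i0 s = vec2 (a + s)%R b.
Proof.
by apply/matrixP => i j; rewrite (ord1 j); move: i; apply: ord2_ind;
  rewrite translateE !mxE /= ?addr0.
Qed.

Lemma translate_vec2_1 a b s : translate (vec2 a b) i1 s = vec2 a (b + s)%R.
Proof.
by apply/matrixP => i j; rewrite (ord1 j); move: i; apply: ord2_ind;
  rewrite translateE !mxE /= ?addr0.
Qed.

Section OneVariable.
Local Open Scope R_scope.

Lemma Derive_shift (g : R -> R) a : Derive (fun s => g (a + s)) 0 = Derive g a.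
Proof.
by rewrite /Derive; congr real; apply: Lim_ext => h; rewrite Rplus_0_l Rplus_0_r.
Qed.

Lemma ex_derive_shift (g : R -> R) a :
  ex_derive (fun s => g (a + s)) 0 <-> ex_derive g a.
Proof.
split => Dg.
- have := @ex_derive_comp _ _ (fun s => g (a + s)) (fun z => z - a) a.
  rewrite Rminus_diag => /(_ Dg) Dga.
  apply: (ex_derive_ext _ _ _ _ (Dga _)) => [s|]; first by congr g; ring.
  by auto_derive.
- have := @ex_derive_comp _ _ g (fun z => a + z) 0.
  by rewrite Rplus_0_r => /(_ Dg); apply; auto_derive.
Qed.

Lemma is_derive_shift (g : R -> R) a l :
  is_derive (fun s => g (a + s)) 0 l -> is_derive g a l.
Proof.
move=> Dg.
have Dga : is_derive (fun s => g (a + s)) (a - a) l by rewrite Rminus_diag.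
have Dsub : is_derive (fun z => z - a) a 1 by auto_derive.
have := is_derive_comp _ (fun z => z - a) a l 1 Dga Dsub.
rewrite /scal /= /mult /= Rmult_1_l.
by apply: is_derive_ext => s; congr g; ring.
Qed.

Lemma is_derive_continuity_pt (f : R -> R) x l :
  is_derive f x l -> continuity_pt f x.
Proof.
by move=> Df; apply/continuity_pt_filterlim; apply: ex_derive_continuous; exists l.
Qed.

Lemma MVT_Derive (f : R -> R) a b : (forall z, ex_derive f z) ->
  exists c, Rmin a b <= c <= Rmax a b /\ f b - f a = Derive f c * (b - a).
Proof.
move=> Df; apply: MVT_gen => z _; first exact: Derive_correct.
exact: is_derive_continuity_pt (Derive_correct _ _ (Df z)).
Qed.

Lemma is_derive_0_eq (f : R -> R) a b : (forall s, is_derive f s 0) -> f a = f b.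
Proof.
move=> Df; have [c [_ E]] := MVT_Derive a b (fun z => ex_intro _ _ (Df z)).
by move: E; rewrite (is_derive_unique _ _ _ (Df c)) Rmult_0_l => /Rminus_diag_uniq_sym.
Qed.

Lemma Rabs_between a b c p d : Rmin a b <= c <= Rmax a b ->
  Rabs (a - p) < d -> Rabs (b - p) < d -> Rabs (c - p) < d.
Proof. by rewrite /Rmin /Rmax; case: Rle_dec => _ ?; split_Rabs; lra. Qed.

(* Split the increment along the two axes and apply the mean value theorem to each piece. *)
Lemma C1_differentiable_pt_lim (g : R -> R -> R) a b :
  (forall u v, ex_derive (fun z => g z v) u) ->
  (forall u v, ex_derive (fun z => g u z) v) ->
  continuity_2d_pt (fun u v => Derive (fun z => g z v) u) a b ->
  continuity_2d_pt (fun u v => Derive (fun z => g u z) v) a b ->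
  differentiable_pt_lim g a b (Derive (fun z => g z b) a) (Derive (fun z => g a z) b).
Proof.
move=> Dg1 Dg2 C1 C2 eps.
have eps2_gt0 : 0 < eps / 2 by have := cond_pos eps; lra.
have [d1 Hd1] := C1 (mkposreal _ eps2_gt0).
have [d2 Hd2] := C2 (mkposreal _ eps2_gt0).
have d_gt0 : 0 < Rmin d1 d2 by apply: Rmin_pos; apply: cond_pos.
exists (mkposreal _ d_gt0) => u v /= Hu Hv.
have m1 := Rmin_l d1 d2; have m2 := Rmin_r d1 d2.
have [c [Hc Ec]] := MVT_Derive a u (Dg1^~ v).
have [e [He Ee]] := MVT_Derive b v (Dg2 a).
have Hca : Rabs (c - a) < d1.
  by apply: (Rabs_between Hc); rewrite ?Rminus_diag ?Rabs_R0; [apply: cond_pos|lra].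
have Heb : Rabs (e - b) < d2.
  by apply: (Rabs_between He); rewrite ?Rminus_diag ?Rabs_R0; [apply: cond_pos|lra].
have K1 := Hd1 c v Hca ltac:(lra).
have K2 := Hd2 a e ltac:(rewrite Rminus_diag Rabs_R0; apply: cond_pos) Heb.
rewrite /= in K1 K2 Ec Ee.
have -> : g u v - g a b - (Derive (fun z => g z b) a * (u - a) + Derive (fun z => g a z) b * (v - b))
   = (Derive (fun z => g z v) c - Derive (fun z => g z b) a) * (u - a)
     + (Derive (fun z => g a z) e - Derive (fun z => g a z) b) * (v - b).
  have -> : g u v - g a b = (g u v - g a v) + (g a v - g a b) by ring.
  by rewrite Ec Ee; ring.
apply: Rle_trans (Rabs_triang _ _) _; rewrite !Rabs_mult.
have := Rmax_l (Rabs (u - a)) (Rabs (v - b)); have := Rmax_r (Rabs (u - a)) (Rabs (v - b)).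
have := Rabs_pos (u - a); have := Rabs_pos (v - b).
have := Rabs_pos (Derive (fun z => g z v) c - Derive (fun z => g z b) a).
have := Rabs_pos (Derive (fun z => g a z) e - Derive (fun z => g a z) b).
nra.
Qed.

End OneVariable.

Lemma jcontP {n} (H : 'cV[R]_n -> R -> R) : jcont H <->
  forall (x : 'cV[R]_n) t eps, (0 < eps)%Re -> exists delta, (0 < delta)%Re /\
    forall (y : 'cV[R]_n) s, (forall i, Rabs (y i j0 - x i j0) < delta)%Re ->
      (Rabs (s - t) < delta)%Re -> (Rabs (H y s - H x t) < eps)%Re.
Proof.
split=> HC x t eps /RltP eps_gt0.
- have [delta [/RltP delta_gt0 Hdelta]] := HC x t eps eps_gt0.
  exists delta; split=> // y s Hy /RltP Hs; apply/RltP; apply: Hdelta => // i.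
  exact/RltP.
- have [delta [delta_gt0 Hdelta]] := HC x t eps eps_gt0.
  exists delta; split; first exact/RltP.
  move=> y s Hy /RltP Hs; apply/RltP; apply: Hdelta => // i; exact/RltP.
Qed.

Section SpaceTimeDirections.
Local Open Scope R_scope.
Variable n : nat.
Implicit Types (d : option 'I_n) (H : 'cV[R]_n -> R -> R).

Definition dspace d : 'cV[R]_n := if d is Some i then delta_mx i j0 else 0%ring.
Definition dtime d : R := if d is Some _ then 0 else 1.

Lemma pdx_Derive d H x t :
  pdx d H x t = Derive (fun r : R => H (x + r *: dspace d)%ring (t + r * dtime d)) 0.
Proof.
case: d => [i|] /=; first by apply: Derive_ext => r; rewrite Rmult_0_r Rplus_0_r.
by rewrite -Derive_shift; apply: Derive_ext => r; rewrite scaler0 addr0 Rmult_1_r.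
Qed.

Lemma ex_pdx_derive d H x t :
  ex_pdx d H x t <-> ex_derive (fun r : R => H (x + r *: dspace d)%ring (t + r * dtime d)) 0.
Proof.
case: d => [i|] /=.
  by split; apply: ex_derive_ext => r; rewrite Rmult_0_r Rplus_0_r.
by rewrite -ex_derive_shift; split; apply: ex_derive_ext => r;
  rewrite scaler0 addr0 Rmult_1_r.
Qed.

Lemma Rabs_dspace d i : Rabs (dspace d i j0) <= 1.
Proof.
case: d => [k|] /=; rewrite !mxE /=; last by rewrite Rabs_R0; lra.
by case: (i == k); rewrite /= ?Rabs_R1 ?Rabs_R0; lra.
Qed.

Lemma Rabs_dtime d : Rabs (dtime d) <= 1.
Proof. by case: d => [k|] /=; rewrite ?Rabs_R1 ?Rabs_R0; lra. Qed.

Definition slice {T} (H : 'cV[R]_n -> R -> T) x t d1 d2 (a b : R) : T :=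
  H (x + a *: dspace d1 + b *: dspace d2)%ring (t + a * dtime d1 + b * dtime d2).

Lemma slice00 H x t d1 d2 : slice H x t d1 d2 0 0 = H x t.
Proof. by rewrite /slice !scale0r !addr0 !Rmult_0_l !Rplus_0_r. Qed.

Lemma slice_comm {T} (K : 'cV[R]_n -> R -> T) x t d1 d2 a b :
  slice K x t d1 d2 a b = slice K x t d2 d1 b a.
Proof. by rewrite /slice addrAC; congr K; ring. Qed.

Lemma slice_shift H x t d1 d2 a b r :
  slice H x t d1 d2 (a + r) b = slice (fun y s => H (y + r *: dspace d1)%ring (s + r * dtime d1))
                                  x t d1 d2 a b.
Proof.
rewrite /slice /=; congr H.
- by rewrite RplusE scalerDl addrA [RHS]addrAC.
- ring.
Qed.

Lemma Derive_slice H x t d1 d2 a b :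
  Derive (fun z => slice H x t d1 d2 z b) a = slice (pdx d1 H) x t d1 d2 a b.
Proof.
by rewrite [RHS]/slice pdx_Derive -Derive_shift; apply: Derive_ext => r; rewrite slice_shift.
Qed.

Lemma ex_derive_slice H x t d1 d2 a b :
  ex_derive (fun z => slice H x t d1 d2 z b) a <-> slice (ex_pdx d1 H) x t d1 d2 a b.
Proof.
rewrite [X in _ <-> X]/slice ex_pdx_derive -ex_derive_shift.
by split; apply: ex_derive_ext => r; rewrite slice_shift.
Qed.

Lemma Rabs_combination p q e1 e2 : Rabs e1 <= 1 -> Rabs e2 <= 1 ->
  Rabs (p * e1 + q * e2) <= Rabs p + Rabs q.
Proof.
move=> He1 He2; apply: Rle_trans (Rabs_triang _ _) _; rewrite !Rabs_mult.
have := Rabs_pos p; have := Rabs_pos q; have := Rabs_pos e1; have := Rabs_pos e2; nra.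
Qed.

Lemma continuity_2d_pt_slice H x t d1 d2 a b :
  jcont H -> continuity_2d_pt (slice H x t d1 d2) a b.
Proof.
move=> /jcontP HC eps.
have [delta [delta_gt0 Hdelta]] :=
  HC (x + a *: dspace d1 + b *: dspace d2)%ring (t + a * dtime d1 + b * dtime d2) _ (cond_pos eps).
have delta2_gt0 : 0 < delta / 2 by lra.
exists (mkposreal _ delta2_gt0) => a' b' /= Ha Hb; apply: Hdelta.
- move=> i; rewrite !mxE -!RplusE -!RmultE.
  have -> : x i j0 + a' * dspace d1 i j0 + b' * dspace d2 i j0
            - (x i j0 + a * dspace d1 i j0 + b * dspace d2 i j0)
          = (a' - a) * dspace d1 i j0 + (b' - b) * dspace d2 i j0 by ring.
  by have := Rabs_combination (a' - a) (b' - b) (Rabs_dspace d1 i) (Rabs_dspace d2 i); lra.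
- have -> : t + a' * dtime d1 + b' * dtime d2 - (t + a * dtime d1 + b * dtime d2)
          = (a' - a) * dtime d1 + (b' - b) * dtime d2 by ring.
  by have := Rabs_combination (a' - a) (b' - b) (Rabs_dtime d1) (Rabs_dtime d2); lra.
Qed.

End SpaceTimeDirections.

Lemma iterD_cat {n} (l1 l2 : seq (option 'I_n)) (H : 'cV[R]_n -> R -> R) :
  Defs.iterD l1 (Defs.iterD l2 H) = Defs.iterD (l1 ++ l2) H.
Proof. by elim: l1 => //= d l1 ->. Qed.

Lemma smooth_iterD {n} (H : 'cV[R]_n -> R -> R) l : smooth H -> smooth (Defs.iterD l H).
Proof. by move=> HS l'; rewrite iterD_cat; apply: HS. Qed.

Lemma smooth_pdx_comm {n} (H : 'cV[R]_n -> R -> R) d1 d2 x t : smooth H ->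
  pdx d1 (pdx d2 H) x t = pdx d2 (pdx d1 H) x t.
Proof.
move=> HS.
have D2 K a b : Derive (fun z => slice K x t d1 d2 a z) b = slice (pdx d2 K) x t d1 d2 a b.
  rewrite slice_comm -Derive_slice.
  by apply: Derive_ext => z; rewrite slice_comm.
have EX2 K a b : ex_derive (fun z => slice K x t d1 d2 a z) b <-> slice (ex_pdx d2 K) x t d1 d2 a b.
  rewrite slice_comm -ex_derive_slice.
  by split; apply: ex_derive_ext => z; rewrite slice_comm.
have E12 a b : Derive (fun z => Derive (fun w => slice H x t d1 d2 z w) b) a
             = slice (pdx d1 (pdx d2 H)) x t d1 d2 a b.
  by rewrite -Derive_slice; apply: Derive_ext => z; rewrite D2.
have E21 a b : Derive (fun z => Derive (fun w => slice H x t d1 d2 w z) a) b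
             = slice (pdx d2 (pdx d1 H)) x t d1 d2 a b.
  by rewrite -D2; apply: Derive_ext => z; rewrite Derive_slice.
have := @Schwarz (slice H x t d1 d2) 0 0; rewrite E12 E21 !slice00; apply.
- exists (mkposreal 1 Rlt_0_1) => a b _ _; split; [|split; [|split]].
  + by apply/ex_derive_slice; apply: (HS [::]).2.
  + by apply/EX2; apply: (HS [::]).2.
  + apply: (ex_derive_ext (fun z => slice (pdx d2 H) x t d1 d2 z b)) => [z|].
      by rewrite D2.
    by apply/ex_derive_slice; apply: (HS [:: d2]).2.
  + apply: (ex_derive_ext (fun z => slice (pdx d1 H) x t d1 d2 a z)) => [z|].
      by rewrite Derive_slice.
    by apply/EX2; apply: (HS [:: d1]).2.
- apply: (continuity_2d_pt_ext (slice (pdx d1 (pdx d2 H)) x t d1 d2)) => [a b|].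
    by rewrite E12.
  exact: continuity_2d_pt_slice (HS [:: d1; d2]).1.
- apply: (continuity_2d_pt_ext (slice (pdx d2 (pdx d1 H)) x t d1 d2)) => [a b|].
    by rewrite E21.
  exact: continuity_2d_pt_slice (HS [:: d2; d1]).1.
Qed.

Definition spaceC1 {n} (H : 'cV[R]_n -> R -> R) : Prop :=
  (forall k x t, ex_pdx (Some k) H x t) /\ forall k, jcont (pdx (Some k) H).

Lemma smooth_spaceC1 {n} (H : 'cV[R]_n -> R -> R) : smooth H -> spaceC1 H.
Proof. by move=> HS; split=> [k x t|k]; [apply: (HS [::]).2 | apply: (HS [:: Some k]).1]. Qed.

Definition differentiable_plane (H : 'cV[R]_2 -> R) : Prop :=
  forall a b, differentiable_pt_lim (fun a b => H (vec2 a b)) a b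
                (pdir i0 H (vec2 a b)) (pdir i1 H (vec2 a b)).

Section PlaneChainRule.
Local Open Scope R_scope.
Implicit Types (H : 'cV[R]_2 -> R -> R).

Lemma slice_vec2 {T} (K : 'cV[R]_2 -> R -> T) t a b :
  slice K 0%ring t (Some i0) (Some i1) a b = K (vec2 a b) t.
Proof.
rewrite /slice /= !Rmult_0_r !Rplus_0_r; congr K.
by apply/matrixP => i j; rewrite (ord1 j); move: i; apply: ord2_ind;
  rewrite !mxE /= ?mulr1 ?mulr0 ?add0r ?addr0.
Qed.

Lemma Derive_vec2_0 H t a b :
  Derive (fun z => H (vec2 z b) t) a = pdx (Some i0) H (vec2 a b) t.
Proof.
rewrite /= -Derive_shift; apply: Derive_ext => r.
by rewrite -/(translate _ _ _) translate_vec2_0.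
Qed.

Lemma Derive_vec2_1 H t a b :
  Derive (fun z => H (vec2 a z) t) b = pdx (Some i1) H (vec2 a b) t.
Proof.
rewrite /= -Derive_shift; apply: Derive_ext => r.
by rewrite -/(translate _ _ _) translate_vec2_1.
Qed.

Lemma ex_derive_vec2_0 H t a b :
  ex_derive (fun z => H (vec2 z b) t) a <-> ex_pdx (Some i0) H (vec2 a b) t.
Proof.
rewrite /= -ex_derive_shift.
by split; apply: ex_derive_ext => r; rewrite -/(translate _ _ _) translate_vec2_0.
Qed.

Lemma ex_derive_vec2_1 H t a b :
  ex_derive (fun z => H (vec2 a z) t) b <-> ex_pdx (Some i1) H (vec2 a b) t.
Proof.
rewrite /= -ex_derive_shift.
by split; apply: ex_derive_ext => r; rewrite -/(translate _ _ _) translate_vec2_1.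
Qed.

Lemma continuity_2d_pt_vec2 H t a b : jcont H ->
  continuity_2d_pt (fun a b => H (vec2 a b) t) a b.
Proof.
move=> HC; apply: (continuity_2d_pt_ext (slice H 0%ring t (Some i0) (Some i1))).
  by move=> a' b'; rewrite slice_vec2.
exact: continuity_2d_pt_slice.
Qed.

Lemma differentiable_pt_lim_vec2 H t a b : spaceC1 H ->
  differentiable_pt_lim (fun a b => H (vec2 a b) t) a b
    (pdx (Some i0) H (vec2 a b) t) (pdx (Some i1) H (vec2 a b) t).
Proof.
move=> [HE HC]; rewrite -Derive_vec2_0 -Derive_vec2_1.
apply: C1_differentiable_pt_lim => [u v|u v||].
- exact/ex_derive_vec2_0.
- exact/ex_derive_vec2_1.
- apply: (continuity_2d_pt_ext (fun a b => pdx (Some i0) H (vec2 a b) t)).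
    by move=> u v; rewrite Derive_vec2_0.
  exact: continuity_2d_pt_vec2.
- apply: (continuity_2d_pt_ext (fun a b => pdx (Some i1) H (vec2 a b) t)).
    by move=> u v; rewrite Derive_vec2_1.
  exact: continuity_2d_pt_vec2.
Qed.

Lemma is_derive_comp_plane (c : R -> 'cV[R]_2) (dc : 'cV[R]_2) H t s : spaceC1 H ->
  (forall i, is_derive (fun r => c r i j0) s (dc i j0)) ->
  is_derive (fun r => H (c r) t) s
    (pdx (Some i0) H (c s) t * dc i0 j0 + pdx (Some i1) H (c s) t * dc i1 j0).
Proof.
move=> HC Dc; apply/is_derive_Reals.
have := derivable_pt_lim_comp_2d (fun a b => H (vec2 a b) t) _ _ s _ _ _ _
  (differentiable_pt_lim_vec2 t (c s i0 j0) (c s i1 j0) HC)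
  (proj1 (is_derive_Reals _ _ _) (Dc i0)) (proj1 (is_derive_Reals _ _ _) (Dc i1)).
by rewrite vec2_eta; apply: derivable_pt_lim_ext => r; rewrite vec2_eta.
Qed.

End PlaneChainRule.

Section JointContinuity.
Local Open Scope R_scope.
Variable n : nat.
Implicit Types (F G : 'cV[R]_n -> R -> R).

Lemma jcont_lift2 (op : R -> R -> R) F G : (forall a b, continuity_2d_pt op a b) ->
  jcont F -> jcont G -> jcont (fun x t => op (F x t) (G x t)).
Proof.
move=> Hop /jcontP HF /jcontP HG; apply/jcontP => x t eps eps_gt0.
have [e He] := Hop (F x t) (G x t) (mkposreal _ eps_gt0).
have [dF [dF_gt0 HdF]] := HF x t e (cond_pos e).
have [dG [dG_gt0 HdG]] := HG x t e (cond_pos e).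
have m1 := Rmin_l dF dG; have m2 := Rmin_r dF dG.
exists (Rmin dF dG); split=> [|y s Hy Hs]; first exact: Rmin_pos.
apply: He; [apply: HdF | apply: HdG]; try lra; move=> i; have := Hy i; lra.
Qed.

Lemma jcont_plus F G : jcont F -> jcont G -> jcont (fun x t => F x t + G x t).
Proof.
apply: jcont_lift2 => a b.
exact: continuity_2d_pt_plus (continuity_2d_pt_id1 a b) (continuity_2d_pt_id2 a b).
Qed.

Lemma jcont_minus F G : jcont F -> jcont G -> jcont (fun x t => F x t - G x t).
Proof.
apply: jcont_lift2 => a b.
exact: continuity_2d_pt_minus (continuity_2d_pt_id1 a b) (continuity_2d_pt_id2 a b).
Qed.

Lemma jcont_mult F G : jcont F -> jcont G -> jcont (fun x t => F x t * G x t).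
Proof.
apply: jcont_lift2 => a b.
exact: continuity_2d_pt_mult (continuity_2d_pt_id1 a b) (continuity_2d_pt_id2 a b).
Qed.

Lemma jcont_comp_plane (K : 'cV[R]_2 -> R -> R) (Phi : R -> 'cV[R]_n -> 'cV[R]_2) :
  jcont K -> (forall i, jcont (fun y t => Phi t y i j0)) -> jcont (fun y t => K (Phi t y) t).
Proof.
move=> /jcontP HK HP; apply/jcontP => y s eps eps_gt0.
have [d [d_gt0 Hd]] := HK (Phi s y) s eps eps_gt0.
have [d0 [d0_gt0 Hd0]] := proj1 (jcontP _) (HP i0) y s d d_gt0.
have [d1 [d1_gt0 Hd1]] := proj1 (jcontP _) (HP i1) y s d d_gt0.
have m1 := Rmin_l d (Rmin d0 d1); have m2 := Rmin_r d (Rmin d0 d1).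
have m3 := Rmin_l d0 d1; have m4 := Rmin_r d0 d1.
exists (Rmin d (Rmin d0 d1)); split=> [|z r Hz Hr]; first by repeat apply: Rmin_pos.
apply: Hd; last lra.
by apply: ord2_ind; [apply: Hd0 | apply: Hd1]; try lra; move=> i; have := Hz i; lra.
Qed.

Lemma iterD_minus F G l : smooth F -> smooth G ->
  Defs.iterD l (fun x t => F x t - G x t)
  = (fun x t => Defs.iterD l F x t - Defs.iterD l G x t).
Proof.
move=> HF HG; elim: l => //= d l ->.
apply: functional_extensionality => x; apply: functional_extensionality => t.
move: (HF l).2 (HG l).2 => /(_ d x t) /ex_pdx_derive DF /(_ d x t) /ex_pdx_derive DG.
by rewrite !pdx_Derive; apply: Derive_minus.
Qed.

Lemma smooth_minus F G : smooth F -> smooth G -> smooth (fun x t => F x t - G x t).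
Proof.
move=> HF HG l; rewrite iterD_minus //; split; first exact: jcont_minus (HF l).1 (HG l).1.
move=> d x t; apply/ex_pdx_derive.
by apply: ex_derive_minus; apply/ex_pdx_derive; [apply: (HF l).2 | apply: (HG l).2].
Qed.

End JointContinuity.

Lemma lap2E (f : 'cV[R]_2 -> R) y :
  lap f y = (pdir i0 (pdir i0 f) y + pdir i1 (pdir i1 f) y)%Re.
Proof.
rewrite /lap !big_ord_recl big_ord0 addr0.
by have -> : lift ord0 ord0 = i1 :> 'I_2 by apply: val_inj.
Qed.

Lemma gradE {n} (f : 'cV[R]_n -> R) x i : grad f x i j0 = pdir i f x.
Proof. by rewrite mxE. Qed.

Lemma Jmx_mul0 (v : 'cV[R]_2) : (Jmx *m v) i0 j0 = v i1 j0.
Proof.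
rewrite !mxE !big_ord_recl big_ord0 !mxE /= mul0r add0r addr0 mul1r.
by congr (v _ _); apply: val_inj.
Qed.

Lemma Jmx_mul1 (v : 'cV[R]_2) : (Jmx *m v) i1 j0 = - v i0 j0.
Proof. by rewrite !mxE !big_ord_recl big_ord0 !mxE /= mulN1r mul0r !addr0. Qed.

Lemma oppmx_Jmx_mul0 (v : 'cV[R]_2) : (- (Jmx *m v)) i0 j0 = - v i1 j0.
Proof. by rewrite mxE Jmx_mul0. Qed.

Lemma oppmx_Jmx_mul1 (v : 'cV[R]_2) : (- (Jmx *m v)) i1 j0 = v i0 j0.
Proof. by rewrite mxE Jmx_mul1 opprK. Qed.

Section Vorticity.
Local Open Scope R_scope.
Variable u : 'cV[R]_2 -> R -> 'cV[R]_2.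
Hypothesis u_smooth : forall i, smooth (fun x t => u x t i j0).

Lemma smooth_vort : smooth (vort u).
Proof.
exact: smooth_minus (smooth_iterD [:: Some i0] (u_smooth i1))
                    (smooth_iterD [:: Some i1] (u_smooth i0)).
Qed.

Hypothesis u_incompressible : incompressible2 u.

Lemma pdx_opp {n} d (F : 'cV[R]_n -> R -> R) x t :
  pdx d (fun x t => - F x t) x t = - pdx d F x t.
Proof. by rewrite !pdx_Derive; apply: Derive_opp. Qed.

Lemma pdx_div_free (i j : 'I_2) : i != j ->
  pdx (Some i) (fun x t => u x t i j0) = fun x t => - pdx (Some j) (fun x t => u x t j j0) x t.
Proof.
move=> neq_ij; apply: functional_extensionality => x; apply: functional_extensionality => t.
have := u_incompressible x t; rewrite /pdir -RplusE -!R0E => div_free.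
by move: i j neq_ij; apply: ord2_ind; apply: ord2_ind; rewrite ?eqxx //= -!R0E => _; lra.
Qed.

(* Differentiate div u = 0 and swap the order of differentiation (Schwarz). *)
Lemma lapv_incompressible x t : lapv u x t = (- (Jmx *m grad (fun y => vort u y t) x))%ring.
Proof.
have D_vort k : pdx (Some k) (vort u) x t
    = pdx (Some k) (pdx (Some i0) (fun x t => u x t i1 j0)) x t
      - pdx (Some k) (pdx (Some i1) (fun x t => u x t i0 j0)) x t.
  rewrite ![pdx _ _ x t]pdx_Derive; apply: Derive_minus.
  - exact: (proj1 (ex_pdx_derive _ _ _ _) ((u_smooth i1 [:: Some i0]).2 (Some k) x t)).
  - exact: (proj1 (ex_pdx_derive _ _ _ _) ((u_smooth i0 [:: Some i1]).2 (Some k) x t)).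
apply/matrixP => i j; rewrite (ord1 j) mxE lap2E; move: i; apply: ord2_ind.
- rewrite oppmx_Jmx_mul0 mxE.
  change (pdx (Some i0) (pdx (Some i0) (fun x t => u x t i0 j0)) x t
          + pdx (Some i1) (pdx (Some i1) (fun x t => u x t i0 j0)) x t
          = - pdx (Some i1) (vort u) x t).
  rewrite (pdx_div_free (i := i0) (j := i1)) // pdx_opp D_vort (smooth_pdx_comm _ _ _ _ (u_smooth i1)); ring.
- rewrite oppmx_Jmx_mul1 mxE.
  change (pdx (Some i0) (pdx (Some i0) (fun x t => u x t i1 j0)) x t
          + pdx (Some i1) (pdx (Some i1) (fun x t => u x t i1 j0)) x t
          = pdx (Some i0) (vort u) x t).
  rewrite (pdx_div_free (i := i1) (j := i0)) // pdx_opp D_vort.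
  rewrite (smooth_pdx_comm (Some i0) (Some i1) _ _ (u_smooth i0)); ring.
Qed.

End Vorticity.

Notation widen23 := (widen_ord (isT : (2 <= 3)%N)).

Definition k0 : 'I_3 := widen23 i0.
Definition k1 : 'I_3 := widen23 i1.
Definition k2 : 'I_3 := ord_max.

Lemma ord3_ind (P : 'I_3 -> Prop) : P k0 -> P k1 -> P k2 -> forall i, P i.
Proof.
move=> P0 P1 P2 [[|[|[|k]]] lt_k3] //.
- by have -> : Ordinal lt_k3 = k0 by apply: val_inj.
- by have -> : Ordinal lt_k3 = k1 by apply: val_inj.
- by have -> : Ordinal lt_k3 = k2 by apply: val_inj.
Qed.

Lemma proj3_vec2 (y : 'cV[R]_3) : proj3 y = vec2 (y k0 j0) (y k1 j0).
Proof. by apply/matrixP => i j; rewrite (ord1 j); move: i; apply: ord2_ind; rewrite !mxE. Qed.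

Lemma proj3Z c (y : 'cV[R]_3) : proj3 (c *: y) = c *: proj3 y.
Proof. by apply/matrixP => i j; rewrite !mxE. Qed.

Lemma proj3_translate (y : 'cV[R]_3) i s :
  proj3 (translate y (widen23 i) s) = translate (proj3 y) i s.
Proof.
apply/matrixP => i' j; rewrite (ord1 j) [LHS]mxE !translateE mxE.
by congr (_ + (if _ then _ else _))%Re; apply/eqP/eqP => [/(congr1 val)/val_inj|->].
Qed.

Lemma proj3_translate_k2 (y : 'cV[R]_3) s : proj3 (translate y k2 s) = proj3 y.
Proof.
apply/matrixP => i j; rewrite (ord1 j) [LHS]mxE translateE mxE.
by move: i; apply: ord2_ind; rewrite /= addr0.
Qed.

Lemma pdir_proj3 (G : 'cV[R]_2 -> R) i y :
  pdir (widen23 i) (fun z => G (proj3 z)) y = pdir i G (proj3 y).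
Proof. by apply: Derive_ext => s; rewrite -/(translate _ _ _) proj3_translate. Qed.

Lemma pdir_proj3_k2 (G : 'cV[R]_2 -> R) y : pdir k2 (fun z => G (proj3 z)) y = 0.
Proof.
rewrite /pdir (Derive_ext _ (fun _ => G (proj3 y))) ?Derive_const // => s.
by rewrite -/(translate _ _ _) proj3_translate_k2.
Qed.

Lemma lap_proj3 (G : 'cV[R]_2 -> R) x : lap (fun z => G (proj3 z)) x = lap G (proj3 x).
Proof.
rewrite lap2E /lap !big_ord_recl big_ord0 addr0.
have -> : lift ord0 ord0 = k1 by apply: val_inj.
have -> : lift ord0 (lift ord0 ord0) = k2 :> 'I_3 by apply: val_inj.
have -> : ord0 = k0 :> 'I_3 by apply: val_inj.
rewrite -RplusE.
have E : forall i, pdir (widen23 i) (pdir (widen23 i)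
                     (fun z => G (proj3 z))) x = pdir i (pdir i G) (proj3 x).
  move=> i; rewrite -pdir_proj3; congr pdir.
  by apply: functional_extensionality => z; rewrite pdir_proj3.
rewrite E E [pdir k2 (fun z => G (proj3 z))](functional_extensionality _ _ (pdir_proj3_k2 G)).
by rewrite /pdir Derive_const addr0.
Qed.

Lemma lapv_lift3 u x t : proj3 (lapv (lift3 u) x t) = lapv u (proj3 x) t.
Proof.
apply/matrixP => i j; rewrite (ord1 j) !mxE -lap_proj3.
by congr lap; apply: functional_extensionality => y; move: i; apply: ord2_ind; rewrite mxE.
Qed.

Lemma inst_barrier_field_lift3 (rho nu t : R) (u : 'cV[R]_2 -> R -> 'cV[R]_2) (x : 'cV[R]_3) :
  (forall i, smooth (fun x t => u x t i j0)) -> incompressible2 u ->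
  proj3 (inst_barrier_field rho nu t (lift3 u) x)
  = - (nu * rho) *: (Jmx *m grad (fun y => vort u y t) (proj3 x)).
Proof.
move=> u_smooth u_incompressible.
by rewrite proj3Z lapv_lift3 lapv_incompressible // scalerN scaleNr.
Qed.

(* Along such a curve dH/ds = c (grad H)^T J grad H, which vanishes because J is skew. *)
Lemma hamiltonian_level_set (B : 'cV[R]_3 -> 'cV[R]_3) (H : 'cV[R]_2 -> R) c
    (gamma : R -> 'cV[R]_3) :
  differentiable_plane H ->
  (forall x, proj3 (B x) = c *: (Jmx *m grad H (proj3 x))) ->
  trajectory B gamma -> forall s1 s2, H (proj3 (gamma s1)) = H (proj3 (gamma s2)).
Proof.
move=> H_diff HB Dgamma s1 s2; apply: (is_derive_0_eq (f := fun s => H (proj3 (gamma s)))) => s.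
have velocity i : B (gamma s) (widen23 i) j0
                  = (c *: (Jmx *m grad H (proj3 (gamma s)))) i j0.
  by rewrite -HB mxE.
have D0 := Dgamma s k0; have D1 := Dgamma s k1.
rewrite velocity mxE Jmx_mul0 mxE in D0.
rewrite velocity mxE Jmx_mul1 mxE in D1.
have := derivable_pt_lim_comp_2d _ _ _ _ _ _ _ _ (H_diff (gamma s k0 j0) (gamma s k1 j0))
  (proj1 (is_derive_Reals _ _ _) D0) (proj1 (is_derive_Reals _ _ _) D1).
move=> /is_derive_Reals; rewrite -proj3_vec2 -RmultE -RoppE.
have -> : (pdir i0 H (proj3 (gamma s)) * (c * pdir i1 H (proj3 (gamma s)))
           + pdir i1 H (proj3 (gamma s)) * (c * - pdir i0 H (proj3 (gamma s))))%Re = 0%Re by ring.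
by apply: is_derive_ext => r; rewrite -proj3_vec2.
Qed.

Section ZeroSet.
Local Open Scope R_scope.

Section Forward.
Variable g : R -> R.
Hypothesis g_cont : forall t, continuity_pt g t.
Hypothesis g_zero_open : forall tau, g tau = 0 ->
  exists eps, 0 < eps /\ forall t, Rabs (t - tau) < eps -> g t = 0.

(* The supremum m of the times up to which g vanishes is itself a zero (by continuity),
   and openness of the zero set then pushes m further: contradiction. *)
Lemma zero_set_forward t0 T : g t0 = 0 -> t0 <= T -> g T = 0.
Proof.
move=> g_t0 le_t0T; apply: NNPP => gT_neq0.
pose E s := t0 <= s /\ forall r, t0 <= r <= s -> g r = 0.
have E_t0 : E t0 by split=> [|r Hr]; [lra | have -> : r = t0 by lra].
have E_bound : bound E.
  by exists T => s [_ Hs]; apply: Rnot_lt_le => lt_Ts; apply: gT_neq0; apply: Hs; lra.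
have [m [m_ub m_lub]] := completeness E E_bound (ex_intro _ _ E_t0).
have le_t0m : t0 <= m by apply: m_ub.
have below_m r : t0 <= r < m -> g r = 0.
  move=> Hr; apply: NNPP => gr_neq0; suff : m <= r by lra.
  by apply: m_lub => s [_ Hs]; apply: Rnot_lt_le => lt_rs; apply: gr_neq0; apply: Hs; lra.
have g_m : g m = 0.
  case: (Rle_lt_or_eq_dec _ _ le_t0m) => [lt_t0m|<-//]; apply: NNPP => gm_neq0.
  have [eta [eta_gt0 Heta]] := @g_cont m (Rabs (g m)) (Rabs_pos_lt _ gm_neq0).
  pose r := Rmax t0 (m - eta / 2).
  have Hr : t0 <= r < m by split; [apply: Rmax_l | rewrite /r /Rmax; case: Rle_dec => _; lra].
  have Dr : D_x no_cond m r /\ Rabs (r - m) < eta.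
    split; first by split; [|lra].
    by rewrite /r /Rmax; case: Rle_dec => Hle; rewrite Rabs_left; lra.
  by have := Heta r Dr; rewrite /dist /= /R_dist below_m // Rminus_0_l Rabs_Ropp; lra.
have [eps [eps_gt0 Heps]] := g_zero_open g_m.
suff : E (m + eps / 2) by move/m_ub; lra.
split=> [|r Hr]; first lra.
case: (Rlt_le_dec r m) => [lt_rm|le_mr]; first by apply: below_m; lra.
by apply: Heps; rewrite Rabs_pos_eq; lra.
Qed.

End Forward.

Lemma zero_set_everywhere (g : R -> R) t0 :
  (forall t, continuity_pt g t) ->
  (forall tau, g tau = 0 -> exists eps, 0 < eps /\ forall t, Rabs (t - tau) < eps -> g t = 0) ->
  g t0 = 0 -> forall T, g T = 0.
Proof.
move=> g_cont g_open g_t0 T; case: (Rle_dec t0 T) => [|/Rnot_le_lt lt_Tt0].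
  exact: zero_set_forward.
rewrite -[T]Ropp_involutive.
apply: (zero_set_forward (g := fun t => g (- t)) _ _ (t0 := - t0)); last lra.
- move=> t; apply: continuity_pt_comp (g_cont _).
  exact: continuity_pt_opp (continuity_pt_id _).
- move=> tau /g_open [eps [eps_gt0 Heps]]; exists eps; split=> // t Ht.
  apply: Heps; have -> : - t - - tau = - (t - tau) by ring.
  by rewrite Rabs_Ropp.
- by rewrite Ropp_involutive.
Qed.

End ZeroSet.

Section Gronwall.
Local Open Scope R_scope.

(* With sg = 1 (forward) or sg = -1 (backward), r |-> g r exp (- sg C (r - tau)) is
   monotone in the direction sg, nonnegative and zero at tau. *)
Lemma gronwall_zero_side (g gd : R -> R) tau t C sg : (sg = 1 \/ sg = -1) ->
  (forall r, Rmin tau t <= r <= Rmax tau t ->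
     is_derive g r (gd r) /\ 0 <= g r /\ Rabs (gd r) <= C * g r) ->
  g tau = 0 -> 0 <= sg * (t - tau) -> g t = 0.
Proof.
move=> sg_pm1 Hg g_tau dir.
pose h r := g r * exp (- sg * C * (r - tau)).
pose dh r := (gd r - sg * C * g r) * exp (- sg * C * (r - tau)).
have Dh r : Rmin tau t <= r <= Rmax tau t -> is_derive h r (dh r).
  move=> Hr; have [Dg _] := Hg r Hr.
  rewrite /h /dh; auto_derive; first by exists (gd r).
  by rewrite (is_derive_unique _ _ _ Dg) /Rminus; ring.
have [c [Hc Ec]] := MVT_gen h tau t dh
  (fun r Hr => Dh r (conj (Rlt_le _ _ (proj1 Hr)) (Rlt_le _ _ (proj2 Hr))))
  (fun r Hr => is_derive_continuity_pt (Dh r Hr)).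
have [_ [g_c Bc]] := Hg c Hc.
have [_ [g_t _]] := Hg t (conj (Rmin_r _ _) (Rmax_r _ _)).
have e_c := exp_pos (- sg * C * (c - tau)); have e_t := exp_pos (- sg * C * (t - tau)).
have sg_dh : sg * dh c <= 0.
  have : sg * (gd c - sg * C * g c) <= 0 by move: Bc; case: sg_pm1 => ->; split_Rabs; nra.
  by rewrite /dh; nra.
have : h t - h tau <= 0.
  rewrite Ec; have -> : dh c * (t - tau) = (sg * dh c) * (sg * (t - tau)).
    by case: sg_pm1 => ->; ring.
  nra.
by rewrite /h g_tau Rmult_0_l Rminus_0_r => h_t; apply: Rle_antisym; nra.
Qed.

Lemma gronwall_zero (g gd : R -> R) tau eps C :
  (forall r, Rabs (r - tau) < eps ->
     is_derive g r (gd r) /\ 0 <= g r /\ Rabs (gd r) <= C * g r) ->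
  g tau = 0 -> forall t, Rabs (t - tau) < eps -> g t = 0.
Proof.
move=> Hg g_tau t Ht.
have Hin r : Rmin tau t <= r <= Rmax tau t -> Rabs (r - tau) < eps.
  move=> Hr; apply: (Rabs_between Hr _ Ht).
  by rewrite Rminus_diag Rabs_R0; have := Rabs_pos (t - tau); lra.
case: (Rle_dec tau t) => Htau.
- exact: (gronwall_zero_side (gd := gd) (C := C) (or_introl erefl)
           (fun r Hr => Hg r (Hin r Hr)) g_tau ltac:(lra)).
- exact: (gronwall_zero_side (gd := gd) (C := C) (or_intror erefl)
           (fun r Hr => Hg r (Hin r Hr)) g_tau ltac:(lra)).
Qed.

End Gronwall.

Section PlanarODEUniqueness.
Local Open Scope R_scope.

Lemma jcont_locally_bounded {n} (K : 'cV[R]_n -> R -> R) (p : 'cV[R]_n) tau : jcont K ->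
  exists d, 0 < d /\ forall (y : 'cV[R]_n) s, (forall i, Rabs (y i j0 - p i j0) < d) ->
    Rabs (s - tau) < d -> Rabs (K y s) <= Rabs (K p tau) + 1.
Proof.
move=> /jcontP K_cont; have [d [d_gt0 Hd]] := K_cont p tau 1 Rlt_0_1.
exists d; split=> // y s Hy Hs; have := Hd y s Hy Hs.
by have := Rabs_triang_inv (K y s) (K p tau); lra.
Qed.

Lemma spaceC1_locally_lipschitz (H : 'cV[R]_2 -> R -> R) (p : 'cV[R]_2) tau : spaceC1 H ->
  exists d L, 0 < d /\ 0 <= L /\ forall (y z : 'cV[R]_2) s,
    (forall i, Rabs (y i j0 - p i j0) < d) -> (forall i, Rabs (z i j0 - p i j0) < d) ->
    Rabs (s - tau) < d ->
    Rabs (H y s - H z s) <= L * (Rabs (y i0 j0 - z i0 j0) + Rabs (y i1 j0 - z i1 j0)).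
Proof.
move=> [HE HC].
pose M k := Rabs (pdx (Some k) H p tau) + 1.
have M_ge0 k : 0 <= M k by rewrite /M; have := Rabs_pos (pdx (Some k) H p tau); lra.
have [d0 [d0_gt0 B0]] := jcont_locally_bounded p tau (HC i0).
have [d1 [d1_gt0 B1]] := jcont_locally_bounded p tau (HC i1).
have m0 := Rmin_l d0 d1; have m1 := Rmin_r d0 d1.
exists (Rmin d0 d1), (M i0 + M i1); split; first exact: Rmin_pos.
split; first by have := M_ge0 i0; have := M_ge0 i1; lra.
move=> y z s Hy Hz Hs.
have [Hy0 Hy1] := (Hy i0, Hy i1); have [Hz0 Hz1] := (Hz i0, Hz i1).
rewrite -(vec2_eta y) -(vec2_eta z) !mxE /=.
move: (y i0 j0) (y i1 j0) (z i0 j0) (z i1 j0) Hy0 Hy1 Hz0 Hz1 => y0 y1 z0 z1 Hy0 Hy1 Hz0 Hz1.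
have [c [Hc Ec]] := MVT_Derive z0 y0 (fun w => proj2 (ex_derive_vec2_0 H s w y1) (HE i0 _ s)).
have [e [He Ee]] := MVT_Derive z1 y1 (fun w => proj2 (ex_derive_vec2_1 H s z0 w) (HE i1 _ s)).
rewrite Derive_vec2_0 in Ec; rewrite Derive_vec2_1 in Ee; cbv beta in Ec, Ee.
have Bc : Rabs (pdx (Some i0) H (vec2 c y1) s) <= M i0.
  apply: B0; last lra.
  apply: ord2_ind; rewrite !mxE /=.
  - by apply: (Rabs_between Hc); lra.
  - lra.
have Be : Rabs (pdx (Some i1) H (vec2 z0 e) s) <= M i1.
  apply: B1; last lra.
  apply: ord2_ind; rewrite !mxE /=.
  - lra.
  - by apply: (Rabs_between He); lra.
have -> : H (vec2 y0 y1) s - H (vec2 z0 z1) s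
        = (H (vec2 y0 y1) s - H (vec2 z0 y1) s) + (H (vec2 z0 y1) s - H (vec2 z0 z1) s) by ring.
rewrite Ec Ee; apply: Rle_trans (Rabs_triang _ _) _; rewrite !Rabs_mult.
have := Rmult_le_compat_r _ _ _ (Rabs_pos (y0 - z0)) Bc.
have := Rmult_le_compat_r _ _ _ (Rabs_pos (y1 - z1)) Be.
have := Rmult_le_pos _ _ (M_ge0 i1) (Rabs_pos (y0 - z0)).
have := Rmult_le_pos _ _ (M_ge0 i0) (Rabs_pos (y1 - z1)).
nra.
Qed.

Lemma sum_sq_eq0 x y : x ^ 2 + y ^ 2 = 0 -> x = 0 /\ y = 0.
Proof. by move=> H; split; apply: Rsqr_0_uniq; rewrite /Rsqr; nra. Qed.

Lemma sq_dist_derive_le x0 x1 h0 h1 L0 L1 : 0 <= L0 -> 0 <= L1 ->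
  Rabs h0 <= L0 * (Rabs x0 + Rabs x1) -> Rabs h1 <= L1 * (Rabs x0 + Rabs x1) ->
  Rabs (2 * x0 * h0 + 2 * x1 * h1) <= 4 * (L0 + L1) * (x0 ^ 2 + x1 ^ 2).
Proof.
move=> L0_ge0 L1_ge0 Hh0 Hh1.
apply: Rle_trans (Rabs_triang _ _) _; rewrite !Rabs_mult Rabs_pos_eq; last lra.
have ax0 := Rabs_pos x0; have ax1 := Rabs_pos x1.
have -> : x0 ^ 2 = Rabs x0 * Rabs x0 by rewrite -Rabs_mult Rabs_pos_eq; [ring | nra].
have -> : x1 ^ 2 = Rabs x1 * Rabs x1 by rewrite -Rabs_mult Rabs_pos_eq; [ring | nra].
have := Rmult_le_compat_l _ _ _ ax0 Hh0; have := Rmult_le_compat_l _ _ _ ax1 Hh1.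
have : 0 <= L1 * (Rabs x0 * (Rabs x0 + Rabs x1)) by apply: Rmult_le_pos => //; nra.
have : 0 <= L0 * (Rabs x1 * (Rabs x0 + Rabs x1)) by apply: Rmult_le_pos => //; nra.
have : 0 <= (L0 + L1) * ((Rabs x0 - Rabs x1) * (Rabs x0 - Rabs x1)).
  by apply: Rmult_le_pos; [lra | apply: Rle_0_sqr].
nra.
Qed.

Lemma continuity_pt_curve_near (c : R -> 'cV[R]_2) tau d :
  (forall i, continuity_pt (fun s => c s i j0) tau) -> 0 < d ->
  exists e, 0 < e /\ forall r, Rabs (r - tau) < e -> forall i, Rabs (c r i j0 - c tau i j0) < d.
Proof.
move=> Hc d_gt0.
have near i : exists e, 0 < e /\ forall r, Rabs (r - tau) < e -> Rabs (c r i j0 - c tau i j0) < d.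
  have [e [e_gt0 He]] := Hc i d d_gt0; exists e; split=> // r Hr.
  case: (Req_dec r tau) => [->|neq_rtau]; first by rewrite Rminus_diag Rabs_R0.
  exact: (He r (conj (conj I (nesym neq_rtau)) Hr)).
have [e0 [e0_gt0 He0]] := near i0; have [e1 [e1_gt0 He1]] := near i1.
have m0 := Rmin_l e0 e1; have m1 := Rmin_r e0 e1.
exists (Rmin e0 e1); split=> [|r Hr]; first exact: Rmin_pos.
by apply: ord2_ind; [apply: He0 | apply: He1]; lra.
Qed.

Variables (V : 'I_2 -> 'cV[R]_2 -> R -> R) (a b : R -> 'cV[R]_2).
Hypothesis V_C1 : forall i, spaceC1 (V i).
Hypothesis a_sol : forall t i, is_derive (fun s => a s i j0) t (V i (a t) t).
Hypothesis b_sol : forall t i, is_derive (fun s => b s i j0) t (V i (b t) t).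

Let dist2 t := (a t i0 j0 - b t i0 j0) ^ 2 + (a t i1 j0 - b t i1 j0) ^ 2.
Let dist2' t := 2 * (a t i0 j0 - b t i0 j0) * (V i0 (a t) t - V i0 (b t) t)
              + 2 * (a t i1 j0 - b t i1 j0) * (V i1 (a t) t - V i1 (b t) t).

Lemma is_derive_sq_diff (p q : R -> R) t dp dq :
  is_derive p t dp -> is_derive q t dq ->
  is_derive (fun s => (p s - q s) ^ 2) t (2 * (p t - q t) * (dp - dq)).
Proof.
move=> Dp Dq; auto_derive; first by split; [exists dp | split; [exists dq|]].
by rewrite (is_derive_unique _ _ _ Dp) (is_derive_unique _ _ _ Dq); ring.
Qed.

Lemma is_derive_dist2 t : is_derive dist2 t (dist2' t).
Proof.
apply: (is_derive_plus (fun s => (a s i0 j0 - b s i0 j0) ^ 2) (fun s => (a s i1 j0 - b s i1 j0) ^ 2)).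
- exact: is_derive_sq_diff (a_sol t i0) (b_sol t i0).
- exact: is_derive_sq_diff (a_sol t i1) (b_sol t i1).
Qed.

Lemma dist2_locally_zero tau : dist2 tau = 0 ->
  exists eps, 0 < eps /\ forall t, Rabs (t - tau) < eps -> dist2 t = 0.
Proof.
move=> /sum_sq_eq0 [E0 E1].
have [d0 [L0 [d0_gt0 [L0_ge0 Lip0]]]] := spaceC1_locally_lipschitz (a tau) tau (V_C1 i0).
have [d1 [L1 [d1_gt0 [L1_ge0 Lip1]]]] := spaceC1_locally_lipschitz (a tau) tau (V_C1 i1).
pose d := Rmin d0 d1; have m0 : d <= d0 := Rmin_l _ _; have m1 : d <= d1 := Rmin_r _ _.
have d_gt0 : 0 < d by apply: Rmin_pos.
have cont (c : R -> 'cV[R]_2) : (forall t i, is_derive (fun s => c s i j0) t (V i (c t) t)) ->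
    exists e, 0 < e /\ forall r, Rabs (r - tau) < e -> forall i, Rabs (c r i j0 - c tau i j0) < d.
  by move=> Dc; apply: continuity_pt_curve_near => // i; exact: is_derive_continuity_pt (Dc tau i).
have [ea [ea_gt0 Ha]] := cont a a_sol; have [eb [eb_gt0 Hb]] := cont b b_sol.
have b_tau i : b tau i j0 = a tau i j0 by move: i; apply: ord2_ind; lra.
pose eps := Rmin d (Rmin ea eb).
have e1 : eps <= d := Rmin_l _ _; have e2 : eps <= Rmin ea eb := Rmin_r _ _.
have e3 := Rmin_l ea eb; have e4 := Rmin_r ea eb.
exists eps; split; first by repeat apply: Rmin_pos.
apply: (gronwall_zero (gd := dist2') (C := 4 * (L0 + L1))); last by rewrite /dist2 E0 E1; ring.
move=> r Hr; split; first exact: is_derive_dist2.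
split; first by rewrite /dist2; have := pow2_ge_0 (a r i0 j0 - b r i0 j0);
  have := pow2_ge_0 (a r i1 j0 - b r i1 j0); lra.
have near_a i : Rabs (a r i j0 - a tau i j0) < d by apply: Ha; lra.
have near_b i : Rabs (b r i j0 - a tau i j0) < d by rewrite -b_tau; apply: Hb; lra.
apply: sq_dist_derive_le => //.
- by apply: Lip0 => [i|i|]; [have := near_a i | have := near_b i | idtac]; lra.
- by apply: Lip1 => [i|i|]; [have := near_a i | have := near_b i | idtac]; lra.
Qed.

Lemma planar_ode_unique t0 : a t0 = b t0 -> forall t, a t = b t.
Proof.
move=> ab_t0 t.
have dist2_t : dist2 t = 0.
  apply: (zero_set_everywhere (t0 := t0)) => [s||]; last by rewrite /dist2 ab_t0; ring.
    exact: is_derive_continuity_pt (is_derive_dist2 s).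
  exact: dist2_locally_zero.
have [E0 E1] := sum_sq_eq0 dist2_t.
apply/matrixP => i j; have -> : j = j0 by apply: ord1.
by move: i; apply: ord2_ind; lra.
Qed.

End PlanarODEUniqueness.

Lemma det_mx22 (A : 'M[R]_2) : \det A = A i0 i0 * A i1 i1 - A i0 i1 * A i1 i0.
Proof.
rewrite (expand_det_row _ i0) !big_ord_recl big_ord0 addr0 /cofactor !det_mx11 !mxE /=.
rewrite expr0 expr1 mul1r mulN1r mulrN.
by congr (A _ _ * A _ _ - A _ _ * A _ _); apply: val_inj.
Qed.

Section FlowJacobian.
Local Open Scope R_scope.
Variables (t0 : R) (u : 'cV[R]_2 -> R -> 'cV[R]_2) (Fh : R -> 'cV[R]_2 -> 'cV[R]_2).
Hypothesis u_smooth : forall i, smooth (fun x t => u x t i j0).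
Hypothesis Fh_flow : flow_map t0 u Fh.

Lemma jac_flowE t x i j : jac (Fh t) x i j = pdx (Some j) (fun x t => Fh t x i j0) x t.
Proof. by rewrite mxE. Qed.

Lemma is_derive_flow_translate i j x t s :
  is_derive (fun r => Fh t (translate x j r) i j0) s (jac (Fh t) (translate x j s) i j).
Proof.
apply: is_derive_shift; rewrite jac_flowE.
apply: (is_derive_ext (fun r => Fh t (translate (translate x j s) j r) i j0)).
  by move=> r; rewrite translateD.
by apply: Derive_correct; apply: ((Fh_flow.2.2 i) [::]).2 (Some j) _ t.
Qed.

Lemma is_derive_comp_flow H j x t : spaceC1 H ->
  is_derive (fun r => H (Fh t (translate x j r)) t) 0
    (pdx (Some i0) H (Fh t x) t * jac (Fh t) x i0 j + pdx (Some i1) H (Fh t x) t * jac (Fh t) x i1 j).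
Proof.
move=> H_C1.
have Dc k : is_derive (fun r => Fh t (translate x j r) k j0) 0 (col j (jac (Fh t) x) k j0).
  by rewrite mxE -[x in jac _ x](translate0 x j); apply: is_derive_flow_translate.
have := is_derive_comp_plane (c := fun r => Fh t (translate x j r)) t H_C1 Dc.
by rewrite translate0 !mxE.
Qed.

Lemma pdx_comp_flow H j x t : spaceC1 H ->
  pdx (Some j) (fun x t => H (Fh t x) t) x t
  = pdx (Some i0) H (Fh t x) t * jac (Fh t) x i0 j + pdx (Some i1) H (Fh t x) t * jac (Fh t) x i1 j.
Proof. by move=> H_C1; apply: is_derive_unique (is_derive_comp_flow j x t H_C1). Qed.

Lemma is_derive_jac_flow i j x t : is_derive (fun s => jac (Fh s) x i j) t
  (pdx (Some i0) (fun x t => u x t i j0) (Fh t x) t * jac (Fh t) x i0 j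
   + pdx (Some i1) (fun x t => u x t i j0) (Fh t x) t * jac (Fh t) x i1 j).
Proof.
have Fi_smooth := Fh_flow.2.2 i.
have Fi_time : pdx None (fun x t => Fh t x i j0) = fun x t => u (Fh t x) t i j0.
  apply: functional_extensionality => y; apply: functional_extensionality => s.
  exact: is_derive_unique (Fh_flow.2.1 y s i).
apply: (is_derive_ext (fun s => pdx (Some j) (fun x t => Fh t x i j0) x s)).
  by move=> s; rewrite jac_flowE.
rewrite -(pdx_comp_flow j x t (smooth_spaceC1 (u_smooth i))).
rewrite -Fi_time -smooth_pdx_comm //.
exact/Derive_correct/((Fi_smooth [:: Some j]).2 None x t).
Qed.

Lemma jac_flow_t0 x i j : jac (Fh t0) x i j = if i == j then 1 else 0.
Proof.
rewrite mxE /pdir (Derive_ext _ (fun s => x i j0 + if i == j then s else 0)); last first.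
  by move=> s; rewrite (Fh_flow.1 _) -/(translate x j s) translateE.
case: (i == j); last by rewrite Rplus_0_r Derive_const.
by apply: is_derive_unique; auto_derive; rewrite ?Rmult_1_l.
Qed.

Hypothesis u_incompressible : incompressible2 u.

(* Liouville: d/dt det (D Fh) = div u * det (D Fh) = 0. *)
Lemma det_jac_flow x t : \det (jac (Fh t) x) = 1.
Proof.
pose a i j s := jac (Fh s) x i j.
rewrite det_mx22 -RmultE -RminusE.
have -> : 1 = a i0 i0 t0 * a i1 i1 t0 - a i0 i1 t0 * a i1 i0 t0 by rewrite /a !jac_flow_t0 /=; ring.
apply: (is_derive_0_eq (f := fun s => a i0 i0 s * a i1 i1 s - a i0 i1 s * a i1 i0 s)) => s.
have div_free : pdx (Some i0) (fun x t => u x t i0 j0) (Fh s x) s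
                + pdx (Some i1) (fun x t => u x t i1 j0) (Fh s x) s = 0.
  exact: u_incompressible (Fh s x) s.
have D := is_derive_minus _ _ _ _ _
  (is_derive_mult _ _ _ _ _ (is_derive_jac_flow i0 i0 x s) (is_derive_jac_flow i1 i1 x s)
     (fun _ _ => Rmult_comm _ _))
  (is_derive_mult _ _ _ _ _ (is_derive_jac_flow i0 i1 x s) (is_derive_jac_flow i1 i0 x s)
     (fun _ _ => Rmult_comm _ _)).
rewrite [X in is_derive _ _ X](_ : _ = 0) in D; first exact: D.
set a00 := pdx (Some i0) (fun x t => u x t i0 j0) (Fh s x) s in div_free *.
set a11 := pdx (Some i1) (fun x t => u x t i1 j0) (Fh s x) s in div_free *.
have -> : a11 = - a00 by lra.
rewrite /minus /plus /mult /= (_ : forall y : R, Hierarchy.opp y = - y) //; ring.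
Qed.

End FlowJacobian.

Section ParametricIntegrals.
Local Open Scope R_scope.
Variable n : nat.
Implicit Types (G K : 'cV[R]_n -> R -> R).

Lemma jcont_continuous_time G y t : jcont G -> continuous (G y) t.
Proof.
move=> /jcontP HG; apply/continuity_pt_filterlim => e e_gt0.
have [d [d_gt0 Hd]] := HG y t e e_gt0.
by exists d; split=> // s [_ Hs]; apply: Hd => // i; rewrite Rminus_diag Rabs_R0.
Qed.

Lemma ex_RInt_jcont G y a b : jcont G -> ex_RInt (G y) a b.
Proof. by move=> HG; apply: ex_RInt_continuous => t _; apply: jcont_continuous_time. Qed.

(* Compactness of [a, b] (Heine) makes the joint continuity uniform in t. *)
Lemma jcont_uniform_time G (p : 'cV[R]_n) a b eps : jcont G -> a <= b -> 0 < eps ->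
  exists d, 0 < d /\ forall y : 'cV[R]_n, (forall i, Rabs (y i j0 - p i j0) < d) ->
    forall t, a <= t <= b -> Rabs (G y t - G p t) < eps.
Proof.
move=> /jcontP HG le_ab eps_gt0.
have eps2_gt0 : 0 < eps / 2 by lra.
pose df tau := let (d, Hd) := constructive_indefinite_description _ (HG p tau _ eps2_gt0) in
               mkposreal d (proj1 Hd).
have Hdf tau (z : 'cV[R]_n) r : (forall i, Rabs (z i j0 - p i j0) < df tau) ->
    Rabs (r - tau) < df tau -> Rabs (G z r - G p tau) < eps / 2.
  by rewrite /df; case: constructive_indefinite_description => d [_ Hd] /=; apply: Hd.
have [d Hd] := compactness_value_1d a b df.
exists d; split=> [|y Hy t Ht]; first exact: cond_pos.
apply: NNPP => Hn; apply: (Hd t Ht) => [[tau [_ [Htau le_d]]]]; apply: Hn.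
have A1 : Rabs (G y t - G p tau) < eps / 2 by apply: Hdf => // i; have := Hy i; lra.
have A2 : Rabs (G p t - G p tau) < eps / 2.
  by apply: Hdf => // i; rewrite Rminus_diag Rabs_R0; apply: cond_pos.
have -> : G y t - G p t = (G y t - G p tau) - (G p t - G p tau) by ring.
by apply: Rle_lt_trans (Rabs_triang _ _) _; rewrite Rabs_Ropp; lra.
Qed.

End ParametricIntegrals.

Lemma continuity_2d_pt_RInt_vec2 (G : 'cV[R]_2 -> R -> R) a b p q : jcont G -> (a <= b)%Re ->
  continuity_2d_pt (fun p q => RInt (G (vec2 p q)) a b) p q.
Proof.
move=> HG le_ab eps.
have eps'_gt0 : (0 < eps / (b - a + 1))%Re by apply: Rdiv_lt_0_compat; [apply: cond_pos | lra].
have [d [d_gt0 Hd]] := jcont_uniform_time (vec2 p q) HG le_ab eps'_gt0.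
exists (mkposreal _ d_gt0) => p' q' /= Hp Hq.
have [Ex' Ex] := (ex_RInt_jcont (vec2 p' q') a b HG, ex_RInt_jcont (vec2 p q) a b HG).
have -> : (RInt (G (vec2 p' q')) a b - RInt (G (vec2 p q)) a b
          = RInt (fun t => G (vec2 p' q') t - G (vec2 p q) t) a b)%Re.
  exact: esym (RInt_minus _ _ _ _ Ex' Ex).
have bound t : (a <= t <= b)%Re -> (Rabs (G (vec2 p' q') t - G (vec2 p q) t) <= eps / (b - a + 1))%Re.
  by move=> Ht; apply/Rlt_le/Hd => //; apply: ord2_ind; rewrite !mxE.
apply: Rle_lt_trans (abs_RInt_le_const _ _ _ _ le_ab (ex_RInt_minus _ _ _ _ Ex' Ex) bound) _.
have := cond_pos eps; rewrite /Rdiv -Rmult_assoc => eps_gt0.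
apply: (Rmult_lt_reg_r (b - a + 1)); first lra.
by rewrite Rmult_assoc Rinv_l; lra.
Qed.

Section TimeAverage.
Local Open Scope R_scope.
Variables (t0 t1 : R).
Hypothesis lt_t01 : t0 < t1.

Lemma Derive_translate {n} (K : 'cV[R]_n -> R -> R) y j s t :
  Derive (fun z => K (translate y j z) t) s = pdx (Some j) K (translate y j s) t.
Proof.
by rewrite /= -Derive_shift; apply: Derive_ext => r; rewrite -/(translate _ _ _) translateD.
Qed.

Lemma ex_derive_translate {n} (K : 'cV[R]_n -> R -> R) y j s t : spaceC1 K ->
  ex_derive (fun z => K (translate y j z) t) s.
Proof.
move=> [HE _]; apply/ex_derive_shift; move: (HE j (translate y j s) t) => /=.
by apply: ex_derive_ext => r; rewrite -/(translate _ _ _) translateD.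
Qed.

Lemma is_derive_tavg_translate {n} (K : 'cV[R]_n -> R -> R) y j s : spaceC1 K -> jcont K ->
  is_derive (fun r => tavg t0 t1 (K (translate y j r))) s
            (tavg t0 t1 (pdx (Some j) K (translate y j s))).
Proof.
move=> K_C1 K_cont; apply: is_derive_scal.
rewrite -(RInt_ext (fun t => Derive (fun z => K (translate y j z) t) s)); last first.
  by move=> t _; rewrite Derive_translate.
apply: (is_derive_RInt_param (fun r t => K (translate y j r) t)).
- by exists (mkposreal 1 Rlt_0_1) => r _ t _; apply: ex_derive_translate.
- move=> t _; apply: (continuity_2d_pt_ext (slice (pdx (Some j) K) y 0 (Some j) None)).
    move=> r t'; rewrite Derive_translate /slice /= scaler0 addr0.
    by rewrite Rmult_0_r Rplus_0_r Rplus_0_l Rmult_1_r.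
  by apply: continuity_2d_pt_slice; apply: K_C1.2.
- by exists (mkposreal 1 Rlt_0_1) => r _; apply: ex_RInt_jcont.
Qed.

Lemma pdir_tavg {n} (K : 'cV[R]_n -> R -> R) y j : spaceC1 K -> jcont K ->
  pdir j (fun y => tavg t0 t1 (K y)) y = tavg t0 t1 (pdx (Some j) K y).
Proof.
move=> K_C1 K_cont; have := is_derive_unique _ _ _ (is_derive_tavg_translate y j 0 K_C1 K_cont).
by rewrite translate0.
Qed.

Lemma differentiable_plane_tavg (K : 'cV[R]_2 -> R -> R) : spaceC1 K -> jcont K ->
  differentiable_plane (fun y => tavg t0 t1 (K y)).
Proof.
move=> K_C1 K_cont a b.
pose Kbar (y : 'cV[R]_2) (_ : R) := tavg t0 t1 (K y).
have D0 a' b' : Derive (fun z => tavg t0 t1 (K (vec2 z b'))) a' = pdir i0 (fun y => tavg t0 t1 (K y)) (vec2 a' b').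
  exact: (Derive_vec2_0 Kbar 0).
have D1 a' b' : Derive (fun z => tavg t0 t1 (K (vec2 a' z))) b' = pdir i1 (fun y => tavg t0 t1 (K y)) (vec2 a' b').
  exact: (Derive_vec2_1 Kbar 0).
have pdir_cont k : continuity_2d_pt (fun a b => pdir k (fun y => tavg t0 t1 (K y)) (vec2 a b)) a b.
  apply: (continuity_2d_pt_ext (fun a b => / (t1 - t0) * RInt (pdx (Some k) K (vec2 a b)) t0 t1)).
    by move=> a' b'; rewrite pdir_tavg.
  apply: continuity_2d_pt_mult; first exact: continuity_2d_pt_const.
  by apply: continuity_2d_pt_RInt_vec2; [apply: K_C1.2 | lra].
rewrite -D0 -D1; apply: C1_differentiable_pt_lim => [a' b'|a' b'||].
- apply/(ex_derive_vec2_0 Kbar 0); eexists.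
  exact: (is_derive_tavg_translate _ i0 0 K_C1 K_cont).
- apply/(ex_derive_vec2_1 Kbar 0); eexists.
  exact: (is_derive_tavg_translate _ i1 0 K_C1 K_cont).
- by apply: (continuity_2d_pt_ext _ _ _ _ _ (pdir_cont i0)) => a' b'; rewrite D0.
- by apply: (continuity_2d_pt_ext _ _ _ _ _ (pdir_cont i1)) => a' b'; rewrite D1.
Qed.

End TimeAverage.

Lemma mulmx_invmx_block_top (M : 'M[R]_3) (w : 'cV[R]_3) :
  M k0 k2 = 0 -> M k1 k2 = 0 -> M k2 k2 = 1 ->
  (M k0 k0 * M k1 k1 - M k0 k1 * M k1 k0 = 1)%Re ->
  (invmx M *m w) k0 j0 = (M k1 k1 * w k0 j0 - M k0 k1 * w k1 j0)%Re /\
  (invmx M *m w) k1 j0 = (- M k1 k0 * w k0 j0 + M k0 k0 * w k1 j0)%Re.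
Proof.
move=> M02 M12 M22 det_top.
have sum3 (f : 'I_3 -> R) : \sum_(k < 3) f k = (f k0 + f k1 + f k2)%Re.
  rewrite !big_ord_recl big_ord0 addr0 -!RplusE Rplus_assoc.
  by congr (f _ + (f _ + f _))%Re; apply: val_inj.
pose N : 'M[R]_3 := \matrix_(i, j)
  (if i == k0 then (if j == k0 then M k1 k1 else if j == k1 then - M k0 k1 else 0)
   else if i == k1 then (if j == k0 then - M k1 k0 else if j == k1 then M k0 k0 else 0)
   else (if j == k0 then M k1 k0 * M k2 k1 - M k1 k1 * M k2 k0
         else if j == k1 then M k0 k1 * M k2 k0 - M k0 k0 * M k2 k1 else 1))%Re.
have MN : M *m N = 1%:M.
  apply/matrixP => i j; rewrite !mxE sum3 !mxE.
  move: i j; apply: ord3_ind; apply: ord3_ind; rewrite /= ?M02 ?M12 ?M22 /=;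
  rewrite ?mulr1n ?mulr0n -?RplusE -?RmultE -?RoppE -?R0E -?R1E; nra.
have [M_unit _] := mulmx1_unit MN.
have -> : invmx M = N by rewrite -(mulKmx M_unit N) MN mulmx1.
by rewrite !mxE !sum3 !mxE /= -!RmultE; split; ring.
Qed.

Section LagrangianVorticity.
Local Open Scope R_scope.
Variables (t0 : R) (u : 'cV[R]_2 -> R -> 'cV[R]_2) (Fh : R -> 'cV[R]_2 -> 'cV[R]_2).
Hypothesis u_smooth : forall i, smooth (fun x t => u x t i j0).
Hypothesis Fh_flow : flow_map t0 u Fh.

Lemma jcont_jac_flow i j : jcont (fun x t => jac (Fh t) x i j).
Proof.
have -> : (fun x t => jac (Fh t) x i j) = pdx (Some j) (fun x t => Fh t x i j0).
  by do 2!apply: functional_extensionality => ?; rewrite jac_flowE.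
exact: ((Fh_flow.2.2 i) [:: Some j]).1.
Qed.

Lemma jcont_comp_flow H : jcont H -> jcont (fun x t => H (Fh t x) t).
Proof. by move=> H_cont; apply: jcont_comp_plane => // i; apply: ((Fh_flow.2.2 i) [::]).1. Qed.

Lemma spaceC1_comp_flow H : smooth H -> spaceC1 (fun x t => H (Fh t x) t).
Proof.
move=> H_smooth; have H_C1 := smooth_spaceC1 H_smooth; split=> [k x t|k].
  by eexists; apply: (is_derive_comp_flow Fh_flow k x t H_C1).
have -> : pdx (Some k) (fun x t => H (Fh t x) t)
        = fun x t => pdx (Some i0) H (Fh t x) t * jac (Fh t) x i0 k
                     + pdx (Some i1) H (Fh t x) t * jac (Fh t) x i1 k.
  by do 2!apply: functional_extensionality => ?; rewrite (pdx_comp_flow Fh_flow).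
apply: jcont_plus; apply: jcont_mult; try exact: jcont_jac_flow.
- exact: jcont_comp_flow (H_smooth [:: Some i0]).1.
- exact: jcont_comp_flow (H_smooth [:: Some i1]).1.
Qed.

End LagrangianVorticity.

Section FlowLift.
Local Open Scope R_scope.
Variables (t0 : R) (u : 'cV[R]_2 -> R -> 'cV[R]_2) (Fh : R -> 'cV[R]_2 -> 'cV[R]_2)
  (F : R -> 'cV[R]_3 -> 'cV[R]_3).
Hypothesis u_smooth : forall i, smooth (fun x t => u x t i j0).
Hypothesis Fh_flow : flow_map t0 u Fh.
Hypothesis F_flow : flow_map t0 (lift3 u) F.

(* Both sides solve the planar ODE x' = u(x, t) with the same initial value. *)
Lemma proj3_flow_lift t x0 : proj3 (F t x0) = Fh t (proj3 x0).
Proof.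
apply: (@planar_ode_unique (fun i y t => u y t i j0) (fun t => proj3 (F t x0))
          (fun t => Fh t (proj3 x0)) _ _ _ t0) => [i|||].
- exact: smooth_spaceC1.
- move=> s i; apply: (is_derive_ext (fun r => F r x0 (widen23 i) j0)).
    by move=> r; rewrite mxE.
  have := F_flow.2.1 x0 s (widen23 i); rewrite mxE.
  by move: i; apply: ord2_ind => /= D; exact: D.
- by move=> s i; apply: (Fh_flow.2.1).
- by rewrite (F_flow.1 x0) (Fh_flow.1 (proj3 x0)).
Qed.

Lemma flow_lift_vertical t x0 r : F t (translate x0 k2 r) k2 j0 = F t x0 k2 j0 + r.
Proof.
suff : F t (translate x0 k2 r) k2 j0 - F t x0 k2 j0
     = F t0 (translate x0 k2 r) k2 j0 - F t0 x0 k2 j0.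
  by rewrite !(F_flow.1) translateE /= -RplusE; lra.
apply: (is_derive_0_eq (f := fun s => F s (translate x0 k2 r) k2 j0 - F s x0 k2 j0)) => s.
have D := is_derive_minus _ _ _ _ _ (F_flow.2.1 (translate x0 k2 r) s k2) (F_flow.2.1 x0 s k2).
rewrite !mxE /= !proj3_flow_lift proj3_translate_k2 /minus /plus /opp /= in D.
by rewrite Rplus_opp_r in D.
Qed.

Lemma jac_flow_lift t x0 i j :
  jac (F t) x0 (widen23 i) (widen23 j)
    = jac (Fh t) (proj3 x0) i j /\
  jac (F t) x0 (widen23 i) k2 = 0 /\ jac (F t) x0 k2 k2 = 1.
Proof.
have Fi y : F t y (widen23 i) j0 = Fh t (proj3 y) i j0.
  by rewrite -proj3_flow_lift mxE.
rewrite !mxE !(functional_extensionality _ _ Fi) (pdir_proj3 (fun w => Fh t w i j0)).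
rewrite (pdir_proj3_k2 (fun w => Fh t w i j0)); split=> //; split=> //.
rewrite /pdir (Derive_ext _ (fun s => F t x0 k2 j0 + s)); last first.
  by move=> s; rewrite -/(translate x0 k2 s) flow_lift_vertical.
by apply: is_derive_unique; auto_derive.
Qed.

Hypothesis u_incompressible : incompressible2 u.

Lemma pullback_lapv_lift3 t x0 : proj3 (pullback F (lapv (lift3 u)) t x0)
  = (- (Jmx *m grad (fun y => vort u (Fh t y) t) (proj3 x0)))%ring.
Proof.
have [A00 [A02 A22]] := jac_flow_lift t x0 i0 i0.
have [A01 _] := jac_flow_lift t x0 i0 i1.
have [A10 [A12 _]] := jac_flow_lift t x0 i1 i0.
have [A11 _] := jac_flow_lift t x0 i1 i1.
have det1 := det_jac_flow u_smooth Fh_flow u_incompressible (proj3 x0) t.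
rewrite det_mx22 -A00 -A01 -A10 -A11 -RmultE -RminusE in det1.
have [P0 P1] := mulmx_invmx_block_top (lapv (lift3 u) (F t x0) t) A02 A12 A22 det1.
have lapv_top i : lapv (lift3 u) (F t x0) t (widen23 i) j0
                  = (- (Jmx *m grad (vort u ^~ t) (Fh t (proj3 x0))))%ring i j0.
  by rewrite -lapv_incompressible // -proj3_flow_lift -lapv_lift3 [RHS]mxE.
have grad_lagrangian j : pdir j (fun y => vort u (Fh t y) t) (proj3 x0)
  = pdir i0 (fun y => vort u y t) (Fh t (proj3 x0)) * jac (Fh t) (proj3 x0) i0 j
    + pdir i1 (fun y => vort u y t) (Fh t (proj3 x0)) * jac (Fh t) (proj3 x0) i1 j.
  exact: (pdx_comp_flow Fh_flow _ _ _ (smooth_spaceC1 (smooth_vort u_smooth))).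
apply/matrixP => i j; have -> : j = j0 by apply: ord1.
rewrite [LHS]mxE /pullback; move: i; apply: ord2_ind.
- rewrite P0 A01 A11 !lapv_top !oppmx_Jmx_mul0 oppmx_Jmx_mul1 !gradE grad_lagrangian.
  by rewrite -!RoppE; ring.
- rewrite P1 A00 A10 !lapv_top oppmx_Jmx_mul0 !oppmx_Jmx_mul1 !gradE grad_lagrangian.
  by rewrite -!RoppE; ring.
Qed.

End FlowLift.

Section MaterialBarrier.
Local Open Scope R_scope.

Lemma tavg_opp t0 t1 (g : R -> R) : ex_RInt g t0 t1 ->
  tavg t0 t1 (fun t => - g t) = - tavg t0 t1 g.
Proof.
move=> Hg; rewrite /tavg (RInt_opp _ _ _ Hg) (_ : forall y : R, Hierarchy.opp y = - y) //.
by rewrite -!RmultE; ring.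
Qed.

Lemma material_barrier_fieldE n (rho nu t0 t1 : R) (F : R -> 'cV[R]_n -> 'cV[R]_n)
    (V : 'cV[R]_n -> R -> 'cV[R]_n) x0 i :
  material_barrier_field rho nu t0 t1 F V x0 i j0
  = nu * rho * tavg t0 t1 (fun t => pullback F (lapv V) t x0 i j0).
Proof. by rewrite !mxE. Qed.

Variables (rho nu t0 t1 : R) (u : 'cV[R]_2 -> R -> 'cV[R]_2) (Fh : R -> 'cV[R]_2 -> 'cV[R]_2)
  (F : R -> 'cV[R]_3 -> 'cV[R]_3).
Hypothesis u_smooth : forall i, smooth (fun x t => u x t i j0).
Hypothesis u_incompressible : incompressible2 u.
Hypothesis Fh_flow : flow_map t0 u Fh.
Hypothesis F_flow : flow_map t0 (lift3 u) F.

Lemma material_barrier_field_lift3 x0 :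
  proj3 (material_barrier_field rho nu t0 t1 F (lift3 u) x0)
  = (- (nu * rho) *: (Jmx *m grad (fun y => tavg t0 t1 (fun t => vort u (Fh t y) t)) (proj3 x0)))%ring.
Proof.
have L_C1 := spaceC1_comp_flow Fh_flow (smooth_vort u_smooth).
have L_cont := jcont_comp_flow Fh_flow (smooth_vort u_smooth [::]).1.
have grad_bar j : pdir j (fun y => tavg t0 t1 (fun t => vort u (Fh t y) t)) (proj3 x0)
    = tavg t0 t1 (fun t => pdir j (fun y => vort u (Fh t y) t) (proj3 x0)).
  exact: pdir_tavg.
have ex_grad j : ex_RInt (fun t => pdir j (fun y => vort u (Fh t y) t) (proj3 x0)) t0 t1.
  exact: ex_RInt_jcont (L_C1.2 j).
have top i t : pullback F (lapv (lift3 u)) t x0 (widen23 i) j0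
    = (- (Jmx *m grad (fun y => vort u (Fh t y) t) (proj3 x0)))%ring i j0.
  by rewrite -(pullback_lapv_lift3 u_smooth Fh_flow F_flow u_incompressible) [RHS]mxE.
apply/matrixP => i j; have -> : j = j0 by apply: ord1.
rewrite [LHS]mxE material_barrier_fieldE [RHS]mxE -RmultE -RoppE.
rewrite /tavg (RInt_ext _ _ _ _ (fun t _ => top i t)); move: i; apply: ord2_ind.
- rewrite (RInt_ext _ (fun t => - pdir i1 (fun y => vort u (Fh t y) t) (proj3 x0))); last first.
    by move=> t _; rewrite oppmx_Jmx_mul0 gradE.
  by rewrite -/(tavg _ _ _) tavg_opp // Jmx_mul0 gradE grad_bar -RmultE; ring.
- rewrite (RInt_ext _ (fun t => pdir i0 (fun y => vort u (Fh t y) t) (proj3 x0))); last first.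
    by move=> t _; rewrite oppmx_Jmx_mul1 gradE.
  by rewrite -/(tavg _ _ _) Jmx_mul1 gradE grad_bar -RmultE -RoppE; ring.
Qed.

End MaterialBarrier.

Theorem theorem5 (rho nu t0 t1 : R)
  (u : 'cV[R]_2 -> R -> 'cV[R]_2) (p : 'cV[R]_2 -> R -> R)
  (Fh : R -> 'cV[R]_2 -> 'cV[R]_2) (F : R -> 'cV[R]_3 -> 'cV[R]_3) :
  0 < rho -> 0 < nu -> t0 < t1 ->
  (forall i, smooth (fun x t => u x t i j0)) -> smooth p ->
  incompressible2 u -> navier_stokes2 rho nu u p ->
  flow_map t0 u Fh -> flow_map t0 (lift3 u) F ->
  let omegabar := fun y : 'cV[R]_2 => tavg t0 t1 (fun t => vort u (Fh t y) t) in
  (* xhat-components of the material barrier equation: Hamiltonian form *)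
  (forall x0 : 'cV[R]_3,
     proj3 (material_barrier_field rho nu t0 t1 F (lift3 u) x0)
     = - (nu * rho) *: (Jmx *m grad omegabar (proj3 x0))) /\
  (* xhat-components of the instantaneous barrier equation: Hamiltonian form *)
  (forall (t : R) (x : 'cV[R]_3),
     proj3 (inst_barrier_field rho nu t (lift3 u) x)
     = - (nu * rho) *: (Jmx *m grad (fun y => vort u y t) (proj3 x))) /\
  (* invariant curves of the material barrier eq. lie in level sets of omegabar *)
  (forall gamma : R -> 'cV[R]_3,
     trajectory (material_barrier_field rho nu t0 t1 F (lift3 u)) gamma ->
     forall s1 s2, omegabar (proj3 (gamma s1)) = omegabar (proj3 (gamma s2))) /\
  (* invariant curves of the instantaneous barrier eq. lie in level sets of omega(.,t) *)
  (forall (t : R) (gamma : R -> 'cV[R]_3),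
     trajectory (inst_barrier_field rho nu t (lift3 u)) gamma ->
     forall s1 s2, vort u (proj3 (gamma s1)) t = vort u (proj3 (gamma s2)) t).
Proof.
move=> _ _ /RltP lt_t01 u_smooth _ u_incompressible _ Fh_flow F_flow omegabar.
have vort_C1 := smooth_spaceC1 (smooth_vort u_smooth).
have material := material_barrier_field_lift3 rho nu t1 u_smooth u_incompressible Fh_flow F_flow.
have inst t x := inst_barrier_field_lift3 rho nu t x u_smooth u_incompressible.
split; [exact: material | split; [exact: inst | split]].
- move=> gamma; apply: (hamiltonian_level_set _ material).
  exact: (differentiable_plane_tavg (K := fun y t => vort u (Fh t y) t) lt_t01) (spaceC1_comp_flow Fh_flow (smooth_vort u_smooth))
           (jcont_comp_flow (H := vort u) Fh_flow (smooth_vort u_smooth [::]).1).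
- move=> t gamma; apply: (hamiltonian_level_set _ (inst t)) => a b.
  exact: differentiable_pt_lim_vec2 t a b vort_C1.
Qed.
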